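(* Consider the infinite hydrodynamic chain (with $\partial=\partial_x$) $$\partial_{t_2}u^{-k}=\big(k\,u^{-(k+1)}-(k-2)u^{-(k-1)}+u^{-k}u^1\big)\partial u^0+u^0u^{-k}\partial u^1+u^0\big(\partial u^{-(k-1)}+\partial u^{-(k+1)}\big),\quad k>2,$$ $$\partial_{t_2}u^{-2}=\big(u^{-2}u^1+2u^{-3}\big)\partial u^0+u^0u^{-2}\partial u^1+u^0\partial u^{-3}+2u^0\partial u^{-1},$$ $$\partial_{t_2}u^{-1}=\big(u^{-1}u^1+u^{-2}\big)\partial u^0+u^0u^{-1}\partial u^1+u^0\partial u^{-2},$$ $$\partial_{t_2}u^0=u^0u^1\partial u^0+(u^0)^2\partial u^1,$$ $$\partial_{t_2}u^1=\big(2u^2-(u^1)^2\big)\partial u^0-u^0u^1\partial u^1+u^0\partial u^2,$$ $$\partial_{t_2}u^k=\big((k+1)u^{k+1}-(k-1)u^{k-1}-u^ku^1\big)\partial u^0-u^0u^k\partial u^1+u^0\big(\partial u^{k+1}+\partial u^{k-1}\big),\quad k>1,$$ for functions $u^\ell(x,\mathbf{t})$, with initial condition $u^{-k}(x,\mathbf{0})=0$ ($k>1$), $u^{-1}(x,\mathbf{0})=\tfrac12$, $u^0(x,\mathbf{0})=x$, $u^k(x,\mathbf{0})=2$ ($k>0$). If $u^{-k}(x,\mathbf{t})\equiv0$ for all $k>2$, then there exists a reduction of the chain, compatible with this initial condition, of the form $$u^{-2}(x,\mathbf{t})=0,\quad u^{-1}(x,\mathbf{t})=u^{-1}(\mathbf{t}),\quad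 u^0(x,\mathbf{t})=2x\,u^{-1}(\mathbf{t}),\quad u^k(x,\mathbf{t})=u^k(\mathbf{t})\ (k>0),$$ where the functions $u^{-1}(\mathbf{t})$, $u^k(\mathbf{t})$ ($k>0$) solve $$\partial_{t_2}u^{-1}=2(u^{-1})^2u^1,\qquad \partial_{t_2}u^k=2u^{-1}\big((k+1)u^{k+1}-u^1u^k-(k-1)u^{k-1}\big),\quad k>0.$$
   Context: $\mathbf{t}=(t_2,t_4,\dots)$ denotes the even coupling constants; $x\in\mathbb{R}$. *)

From Stdlib Require Import Reals ZArith Lra.
From Coquelicot Require Import Coquelicot.
Open Scope R_scope.

(* The times t = (t_2, t_4, ...) are encoded as a sequence t : nat -> R with
   t n = t_{2(n+1)}; in particular t_2 = t O. *)
Definition times := nat -> R.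
Definition t0 : times := fun _ => 0.

Definition tupd (t : times) (s : R) : times :=
  fun n => match n with O => s | S _ => t n end.

Definition field := Z -> R -> times -> R.

Definition dx (u : field) (l : Z) (x : R) (t : times) : R :=
  Derive (fun y => u l y t) x.
Definition dt2 (u : field) (l : Z) (x : R) (t : times) : R :=
  Derive (fun s => u l x (tupd t s)) (t O).

Definition chain_t2 (u : field) : Prop :=
  (forall l x t, ex_derive (fun y => u l y t) x /\
                 ex_derive (fun s => u l x (tupd t s)) (t O)) /\
  forall x t,
  (forall k : Z, (k > 2)%Z ->
     dt2 u (- k) x t =
       (IZR k * u (- (k + 1))%Z x t - (IZR k - 2) * u (- (k - 1))%Z x t
          + u (- k)%Z x t * u 1%Z x t) * dx u 0 x t
       + u 0%Z x t * u (- k)%Z x t * dx u 1 x t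
       + u 0%Z x t * (dx u (- (k - 1)) x t + dx u (- (k + 1)) x t)) /\
  dt2 u (-2) x t =
     (u (-2)%Z x t * u 1%Z x t + 2 * u (-3)%Z x t) * dx u 0 x t
     + u 0%Z x t * u (-2)%Z x t * dx u 1 x t
     + u 0%Z x t * dx u (-3) x t + 2 * u 0%Z x t * dx u (-1) x t /\
  dt2 u (-1) x t =
     (u (-1)%Z x t * u 1%Z x t + u (-2)%Z x t) * dx u 0 x t
     + u 0%Z x t * u (-1)%Z x t * dx u 1 x t
     + u 0%Z x t * dx u (-2) x t /\
  dt2 u 0 x t =
     u 0%Z x t * u 1%Z x t * dx u 0 x t + (u 0%Z x t) ^ 2 * dx u 1 x t /\
  dt2 u 1 x t =
     (2 * u 2%Z x t - (u 1%Z x t) ^ 2) * dx u 0 x t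
     - u 0%Z x t * u 1%Z x t * dx u 1 x t + u 0%Z x t * dx u 2 x t /\
  (forall k : Z, (k > 1)%Z ->
     dt2 u k x t =
       ((IZR k + 1) * u (k + 1)%Z x t - (IZR k - 1) * u (k - 1)%Z x t
          - u k x t * u 1%Z x t) * dx u 0 x t
       - u 0%Z x t * u k x t * dx u 1 x t
       + u 0%Z x t * (dx u (k + 1) x t + dx u (k - 1) x t)).

Definition initial_condition (u : field) : Prop :=
  forall x,
    (forall k : Z, (k > 1)%Z -> u (- k)%Z x t0 = 0) /\
    u (-1)%Z x t0 = 1 / 2 /\
    u 0%Z x t0 = x /\
    (forall k : Z, (k > 0)%Z -> u k x t0 = 2).

(* the reduction ansatz built from u^{-1}(t) = a t and u^k(t) = b k t (k > 0):
   u^{-k} = 0 (k >= 2), u^{-1} = a, u^0 = 2 x a, u^k = b k. *)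
Definition reduction (a : times -> R) (b : nat -> times -> R) : field :=
  fun l x t =>
    if (l <=? -2)%Z then 0
    else if (l =? -1)%Z then a t
    else if (l =? 0)%Z then 2 * x * a t
    else b (Z.to_nat l) t.

(* Under the ansatz every field except u^0 = 2 x u^{-1} is independent of x, so the
   only surviving x-derivative is ∂u^0 = 2 u^{-1}.  The equations for u^{-k}, k >= 2,
   then read 0 = 0, the one for u^0 is 2x times the one for u^{-1}, and the equations
   for u^{-1} and u^k, k > 0, become exactly the prescribed ODEs for u^{-1}(t), u^k(t). *)
From Stdlib Require Import Reals ZArith Lra Lia.
From Coquelicot Require Import Coquelicot.
Open Scope R_scope.

Lemma dt2_is_derive (u : field) l x t d :
  is_derive (fun s => u l x (tupd t s)) (t O) d -> dt2 u l x t = d.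
Proof. apply is_derive_unique. Qed.

Section Reduction.
Variables (a : times -> R) (b : nat -> times -> R).

Lemma reduction_le_m2 l x t : (l <= -2)%Z -> reduction a b l x t = 0.
Proof. intro Hl. unfold reduction. now rewrite (proj2 (Z.leb_le _ _) Hl). Qed.

Lemma reduction_m1 x t : reduction a b (-1)%Z x t = a t.
Proof. reflexivity. Qed.

Lemma reduction_0 x t : reduction a b 0%Z x t = 2 * x * a t.
Proof. reflexivity. Qed.

Lemma reduction_pos l x t : (l >= 1)%Z -> reduction a b l x t = b (Z.to_nat l) t.
Proof.
  intro Hl. unfold reduction.
  rewrite (proj2 (Z.leb_gt _ _)), !(proj2 (Z.eqb_neq _ _)) by lia.
  reflexivity.
Qed.

Lemma reduction_indep_x l x y t :
  l <> 0%Z -> reduction a b l x t = reduction a b l y t.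
Proof.
  intro Hl. unfold reduction.
  destruct (l <=? -2)%Z, (l =? -1)%Z; try reflexivity.
  now rewrite (proj2 (Z.eqb_neq _ _) Hl).
Qed.

Lemma dx_reduction_neq0 l x t : l <> 0%Z -> dx (reduction a b) l x t = 0.
Proof.
  intro Hl. unfold dx.
  rewrite (Derive_ext _ (fun _ => reduction a b l 0%R t))
    by (intro; now apply reduction_indep_x).
  apply Derive_const.
Qed.

Lemma dx_reduction_0 x t : dx (reduction a b) 0 x t = 2 * a t.
Proof. unfold dx, reduction; simpl. apply is_derive_unique. auto_derive; auto. ring. Qed.

Lemma ex_derive_reduction_x l x t : ex_derive (fun y => reduction a b l y t) x.
Proof.
  destruct (Z.eq_dec l 0) as [->|Hl].
  - unfold reduction; simpl. auto_derive; auto.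
  - apply (ex_derive_ext (fun _ => reduction a b l 0%R t)); [|apply ex_derive_const].
    intro; now apply reduction_indep_x.
Qed.

Hypothesis a_flow : forall t,
  is_derive (fun s => a (tupd t s)) (t O) (2 * (a t) ^ 2 * b 1%nat t).
Hypothesis b_flow : forall (k : nat) t, (k > 0)%nat ->
  is_derive (fun s => b k (tupd t s)) (t O)
    (2 * a t * ((INR k + 1) * b (S k) t - b 1%nat t * b k t
                - (INR k - 1) * b (Nat.pred k) t)).

Lemma is_derive_reduction_t2_le_m2 l x t : (l <= -2)%Z ->
  is_derive (fun s => reduction a b l x (tupd t s)) (t O) 0.
Proof.
  intro Hl. apply (is_derive_ext (fun _ => 0)); [|exact (is_derive_const 0 (t O))].
  intro; symmetry; now apply reduction_le_m2.
Qed.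

Lemma is_derive_reduction_t2_0 x t :
  is_derive (fun s => reduction a b 0%Z x (tupd t s)) (t O)
    (2 * x * (2 * (a t) ^ 2 * b 1%nat t)).
Proof. exact (is_derive_scal (fun s => a (tupd t s)) _ _ _ (a_flow t)). Qed.

Lemma is_derive_reduction_t2_pos l x t : (l >= 1)%Z ->
  is_derive (fun s => reduction a b l x (tupd t s)) (t O)
    (2 * a t * ((INR (Z.to_nat l) + 1) * b (S (Z.to_nat l)) t
                - b 1%nat t * b (Z.to_nat l) t
                - (INR (Z.to_nat l) - 1) * b (Nat.pred (Z.to_nat l)) t)).
Proof.
  intro Hl. apply (is_derive_ext (fun s => b (Z.to_nat l) (tupd t s))).
  - intro; symmetry; now apply reduction_pos.
  - apply b_flow. lia.
Qed.

Lemma ex_derive_reduction_t2 l x t :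
  ex_derive (fun s => reduction a b l x (tupd t s)) (t O).
Proof.
  destruct (Z_le_gt_dec l (-2)) as [Hl|Hl].
  { eexists; now apply is_derive_reduction_t2_le_m2. }
  destruct (Z.eq_dec l (-1)) as [->|Hm1]; [eexists; apply a_flow|].
  destruct (Z.eq_dec l 0) as [->|H0]; [eexists; apply is_derive_reduction_t2_0|].
  eexists. apply is_derive_reduction_t2_pos. lia.
Qed.

Lemma reduction_chain_t2 : chain_t2 (reduction a b).
Proof.
  split; [intros; split; [apply ex_derive_reduction_x | apply ex_derive_reduction_t2]|].
  intros x t; repeat split.
  - intros k Hk.
    rewrite (dt2_is_derive _ _ _ _ _ (is_derive_reduction_t2_le_m2 (- k) x t ltac:(lia))).
    rewrite !(reduction_le_m2 (- _)), dx_reduction_0, !dx_reduction_neq0 by lia.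
    ring.
  - rewrite (dt2_is_derive _ _ _ _ _ (is_derive_reduction_t2_le_m2 (-2) x t ltac:(lia))).
    rewrite (reduction_le_m2 (-2)), (reduction_le_m2 (-3)) by lia.
    rewrite dx_reduction_0, !dx_reduction_neq0 by lia.
    ring.
  - rewrite (dt2_is_derive (reduction a b) (-1) x t _ (a_flow t)).
    rewrite reduction_m1, reduction_0, (reduction_le_m2 (-2)), reduction_pos by lia.
    rewrite dx_reduction_0, !dx_reduction_neq0 by lia.
    change (Z.to_nat 1) with 1%nat. ring.
  - rewrite (dt2_is_derive _ _ _ _ _ (is_derive_reduction_t2_0 x t)).
    rewrite reduction_0, reduction_pos, dx_reduction_0, !dx_reduction_neq0 by lia.
    change (Z.to_nat 1) with 1%nat. ring.
  - rewrite (dt2_is_derive _ _ _ _ _ (is_derive_reduction_t2_pos 1 x t ltac:(lia))).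
    rewrite reduction_0, !reduction_pos, dx_reduction_0, !dx_reduction_neq0 by lia.
    change (Z.to_nat 1) with 1%nat; change (Z.to_nat 2) with 2%nat.
    rewrite INR_1. ring.
  - intros k Hk.
    rewrite (dt2_is_derive _ _ _ _ _ (is_derive_reduction_t2_pos k x t ltac:(lia))).
    rewrite reduction_0, !reduction_pos, dx_reduction_0, !dx_reduction_neq0 by lia.
    replace (Z.to_nat (k + 1)) with (S (Z.to_nat k)) by lia.
    replace (Z.to_nat (k - 1)) with (Nat.pred (Z.to_nat k)) by lia.
    rewrite INR_IZR_INZ, Z2Nat.id by lia.
    change (Z.to_nat 1) with 1%nat. ring.
Qed.

Lemma reduction_initial_condition :
  a t0 = 1 / 2 -> (forall k : nat, (k > 0)%nat -> b k t0 = 2) ->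
  initial_condition (reduction a b).
Proof.
  intros a_init b_init x. repeat split.
  - intros k Hk. apply reduction_le_m2. lia.
  - exact a_init.
  - rewrite reduction_0, a_init. field.
  - intros k Hk. rewrite reduction_pos by lia. apply b_init. lia.
Qed.

End Reduction.

Theorem theorem5p2 :
  forall (a : times -> R) (b : nat -> times -> R),
    (forall t, is_derive (fun s => a (tupd t s)) (t O)
                 (2 * (a t) ^ 2 * b 1%nat t)) ->
    (forall (k : nat) t, (k > 0)%nat ->
       is_derive (fun s => b k (tupd t s)) (t O)
         (2 * a t * ((INR k + 1) * b (S k) t - b 1%nat t * b k t
                     - (INR k - 1) * b (Nat.pred k) t))) ->
    a t0 = 1 / 2 ->
    (forall k : nat, (k > 0)%nat -> b k t0 = 2) ->
    let u := reduction a b in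
    (forall k : Z, (k > 2)%Z -> forall x t, u (- k)%Z x t = 0) /\
    chain_t2 u /\ initial_condition u.
Proof.
  intros a b a_flow b_flow a_init b_init u.
  split; [|split].
  - intros k Hk x t. apply reduction_le_m2. lia.
  - exact (reduction_chain_t2 a b a_flow b_flow).
  - exact (reduction_initial_condition a b a_init b_init).
Qed.
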